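(* Let $\alpha\in(0,\pi)$ and let $a,c\in\mathbb{R}^2$ be two distinct points. Then a plane $\alpha$-bend multigraph (resp. a plane $\alpha$-arc multigraph) contains at most two edges between $a$ and $c$, and at most one of them in each of the two open halfplanes bounded by the line $ac$.
   Context: For $\alpha\in(0,\pi)$, an $\alpha$-bend edge between points $a$ and $c$ is a polyline $(a,b,c)$ with a single bend point $b$ (not on the line $ac$) such that the interior angle of the triangle $abc$ at $b$ equals $\alpha$. An $\alpha$-arc edge between $a$ and $c$ is a circular arc with endpoints $a$ and $c$ and central angle $2(\pi-\alpha)$. An $\alpha$-bend (resp. $\alpha$-arc) multigraph is a multigraph embedded in the plane (vertices are distinct points; edges are curves between their endpoints that pairwise do not cross, meet only at common endpoints, and contain no vertex in their relative interior; parallel edges are allowed) in which every edge is an $\alpha$-bend (resp. $\alpha$-arc) edge. *)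

From HB Require Import structures.
From mathcomp Require Import all_boot all_order all_algebra.
From mathcomp Require Import boolp classical_sets reals trigo.
Set Implicit Arguments. Unset Strict Implicit. Unset Printing Implicit Defensive.
Import Order.TTheory GRing.Theory Num.Theory.
Local Open Scope ring_scope.
Local Open Scope classical_set_scope.

Section Geom.
Variable R : realType.
Definition pt2 := (R * R)%type.

Definition padd (p q : pt2) : pt2 := (p.1 + q.1, p.2 + q.2).
Definition psub (p q : pt2) : pt2 := (p.1 - q.1, p.2 - q.2).
Definition pscale (t : R) (p : pt2) : pt2 := (t * p.1, t * p.2).
Definition dot (p q : pt2) : R := p.1 * q.1 + p.2 * q.2.
Definition cross (p q : pt2) : R := p.1 * q.2 - p.2 * q.1.
Definition pnorm (p : pt2) : R := Num.sqrt (dot p p).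

Definition on_line (a c b : pt2) : Prop := cross (psub c a) (psub b a) = 0.

Definition segment (p q : pt2) : set pt2 :=
  [set padd p (pscale t (psub q p)) | t in [set t : R | 0 <= t <= 1]].

Definition angle_at (a b c : pt2) : R :=
  acos (dot (psub a b) (psub c b) / (pnorm (psub a b) * pnorm (psub c b))).

Definition is_alpha_bend_edge (alpha : R) (a c : pt2) (C : set pt2) : Prop :=
  exists b : pt2, ~ on_line a c b /\ angle_at a b c = alpha /\
                    C = segment a b `|` segment b c.

Definition circ_arc (o : pt2) (r t0 th : R) : set pt2 :=
  [set padd o (pscale r (cos t, sin t)) | t in [set t : R | t0 <= t <= t0 + th]].

Definition is_alpha_arc_edge (alpha : R) (a c : pt2) (C : set pt2) : Prop :=
  let th := 2 * (pi - alpha) in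
  exists (o : pt2) (r t0 : R), 0 < r /\ C = circ_arc o r t0 th /\
    ((a = padd o (pscale r (cos t0, sin t0)) /\
      c = padd o (pscale r (cos (t0 + th), sin (t0 + th)))) \/
     (c = padd o (pscale r (cos t0, sin t0)) /\
      a = padd o (pscale r (cos (t0 + th), sin (t0 + th))))).

Inductive edge_kind := Bend | Arc.

Definition is_alpha_edge (k : edge_kind) (alpha : R) (a c : pt2) (C : set pt2) :=
  match k with
  | Bend => is_alpha_bend_edge alpha a c C
  | Arc => is_alpha_arc_edge alpha a c C
  end.

Definition plane_alpha_multigraph (k : edge_kind) (alpha : R)
  (V E : finType) (pos : V -> pt2) (src tgt : E -> V) (curve : E -> set pt2)
  : Prop :=
  [/\ injective pos,
      (forall e, src e != tgt e),
      (forall e, is_alpha_edge k alpha (pos (src e)) (pos (tgt e)) (curve e)),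
      (forall e f, e != f -> forall p, curve e p -> curve f p ->
         exists v, p = pos v /\ (v = src e \/ v = tgt e) /\ (v = src f \/ v = tgt f))
    & (forall e v, curve e (pos v) -> v = src e \/ v = tgt e)].

Definition edge_between (V E : finType) (pos : V -> pt2) (src tgt : E -> V)
  (a c : pt2) (e : E) : Prop :=
  (pos (src e) = a /\ pos (tgt e) = c) \/ (pos (src e) = c /\ pos (tgt e) = a).

Definition open_halfplane (a c : pt2) (s : bool) : set pt2 :=
  [set p | if s then 0 < cross (psub c a) (psub p a)
                else cross (psub c a) (psub p a) < 0].

Definition curve_in (a c : pt2) (C H : set pt2) : Prop :=
  C `\` [set a; c] `<=` H.

End Geom.

(* An edge between [a] and [c] lies on one side of the line [a c] and has a
   witness point there: its bend point, or the midpoint of its arc.  Two arcs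
   on the same side have the same midpoint, which would be a common interior
   point of two edges.  Two bend points [b1], [b2] on the same side see [a c]
   under the same angle, hence lie on one circle through [a] and [c]; if [b2]
   comes first as seen from [a], the chords [a b2] and [b1 c] cross strictly
   inside that side, again a common interior point. *)

From HB Require Import structures.
From mathcomp Require Import all_boot all_order all_algebra.
From mathcomp Require Import boolp classical_sets reals trigo.
From mathcomp Require Import ring lra.
Set Implicit Arguments. Unset Strict Implicit. Unset Printing Implicit Defensive.
Import Order.TTheory GRing.Theory Num.Theory.
Local Open Scope ring_scope.
Local Open Scope classical_set_scope.

Section PlaneGeometry.
Variable R : realType.
Implicit Types (a b c p q x y w : pt2 R) (t : R) (s : bool).

Definition orient a c p : R := cross (psub c a) (psub p a).
Definition dot_at a p c : R := dot (psub a p) (psub c p).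
Definition lerp x y t : pt2 R := padd x (pscale t (psub y x)).

Lemma orient_left a c : orient a c a = 0.
Proof. by rewrite /orient /cross /psub /=; ring. Qed.

Lemma orient_right a c : orient a c c = 0.
Proof. by rewrite /orient /cross /psub /=; ring. Qed.

Lemma orientC a c p : orient a c p = - orient a p c.
Proof. by rewrite /orient /cross /psub /=; ring. Qed.

Lemma orient_lerp a c x y t :
  orient a c (lerp x y t) = (1 - t) * orient a c x + t * orient a c y.
Proof. by rewrite /orient /lerp /cross /psub /padd /pscale /=; ring. Qed.

Lemma lerp_orient_eq0 a c w p : orient a w p = 0 -> orient a c w != 0 ->
  p = lerp a w (orient a c p / orient a c w).
Proof.
rewrite /orient /lerp /cross /psub /padd /pscale.
case: p a c w => [p1 p2] [a1 a2] [c1 c2] [w1 w2] /= pw cw.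
congr (_, _); rewrite mulrAC.
- have -> : ((c1 - a1) * (p2 - a2) - (c2 - a2) * (p1 - a1)) * (w1 - a1) =
            (p1 - a1) * ((c1 - a1) * (w2 - a2) - (c2 - a2) * (w1 - a1)).
    transitivity ((p1 - a1) * ((c1 - a1) * (w2 - a2) - (c2 - a2) * (w1 - a1))
      + (c1 - a1) * ((w1 - a1) * (p2 - a2) - (w2 - a2) * (p1 - a1))); first ring.
    by rewrite pw; ring.
  by rewrite mulfK //; ring.
- have -> : ((c1 - a1) * (p2 - a2) - (c2 - a2) * (p1 - a1)) * (w2 - a2) =
            (p2 - a2) * ((c1 - a1) * (w2 - a2) - (c2 - a2) * (w1 - a1)).
    transitivity ((p2 - a2) * ((c1 - a1) * (w2 - a2) - (c2 - a2) * (w1 - a1))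
      + (c2 - a2) * ((w1 - a1) * (p2 - a2) - (w2 - a2) * (p1 - a1))); first ring.
    by rewrite pw; ring.
  by rewrite mulfK //; ring.
Qed.

Lemma dot_self_ge0 p : 0 <= dot p p.
Proof. by rewrite /dot addr_ge0 // -expr2 sqr_ge0. Qed.

Lemma dot_psub_gt0 x y : x <> y -> 0 < dot (psub x y) (psub x y).
Proof.
move=> xy; rewrite lt_def dot_self_ge0 andbT; apply: contra_notN xy.
rewrite /dot /psub /= -!expr2 paddr_eq0 ?sqr_ge0 // !sqrf_eq0 !subr_eq0.
by case: x y => x1 x2 [y1 y2] /andP[/eqP /= -> /eqP ->].
Qed.

Lemma segmentC x y : segment x y = segment y x.
Proof.
suff sub (z w : pt2 R) : segment z w `<=` segment w z by apply/seteqP; split; apply: sub.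
move=> p [t /= /andP[t0 t1] <-]; exists (1 - t).
  by rewrite /= subr_ge0 t1 lerBlDr lerDl t0.
by rewrite /padd /pscale /psub /=; congr (_, _); ring.
Qed.

Lemma segment_right x y : segment x y y.
Proof.
exists 1; first by rewrite /= lexx ler01.
by case: x y => [x1 x2] [y1 y2]; rewrite /padd /pscale /psub /=; congr (_, _); ring.
Qed.

Lemma open_halfplane_neq0 a c s p : open_halfplane a c s p -> orient a c p != 0.
Proof.
by rewrite /open_halfplane /=; case: s => h; [rewrite gt_eqF | rewrite lt_eqF].
Qed.

Lemma open_halfplane_ends a c s p : open_halfplane a c s p -> ~ [set a; c] p.
Proof.
move=> /open_halfplane_neq0 + ends; case: ends => ->;
  by rewrite ?orient_left ?orient_right eqxx.
Qed.

Lemma open_halfplane_orient a c p :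
  orient a c p != 0 -> open_halfplane a c (0 < orient a c p) p.
Proof. by rewrite /open_halfplane /= -/(orient a c p); case: ltgtP. Qed.

Lemma open_halfplane_mul_gt0 a c s p q : open_halfplane a c s p ->
  open_halfplane a c s q -> 0 < orient a c p * orient a c q.
Proof.
rewrite /open_halfplane /=.
by case: s => hp hq; [rewrite pmulr_rgt0 | rewrite nmulr_rgt0].
Qed.

Lemma open_halfplane_mul a c s p q : open_halfplane a c s p ->
  0 < orient a c p * orient a c q -> open_halfplane a c s q.
Proof.
by rewrite /open_halfplane /=; case: s => hp; [rewrite pmulr_rgt0 | rewrite nmulr_rgt0].
Qed.

Lemma open_halfplane_uniq a c s s' p :
  open_halfplane a c s p -> open_halfplane a c s' p -> s = s'.
Proof. by rewrite /open_halfplane /=; case: s; case: s' => // h1 h2; lra. Qed.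

Lemma dot_at_orient_sqr a b c :
  dot_at a b c ^+ 2 + orient a c b ^+ 2 =
  (pnorm (psub a b) * pnorm (psub c b)) ^+ 2.
Proof.
rewrite exprMn /pnorm !sqr_sqrtr ?dot_self_ge0 //.
by rewrite /dot_at /orient /dot /cross /psub /=; ring.
Qed.

Lemma pnorm_at_gt0 a b c : orient a c b != 0 ->
  0 < pnorm (psub a b) * pnorm (psub c b).
Proof.
move=> ob; rewrite lt_def mulr_ge0 ?sqrtr_ge0 // andbT.
apply: contra ob => /eqP N0; rewrite -sqrf_eq0; apply/eqP.
have := dot_at_orient_sqr a b c; rewrite N0 expr0n /=.
have := sqr_ge0 (dot_at a b c); have := sqr_ge0 (orient a c b); lra.
Qed.

Lemma cos_angle_at a b c : orient a c b != 0 ->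
  cos (angle_at a b c) = dot_at a b c / (pnorm (psub a b) * pnorm (psub c b)).
Proof.
move=> ob; have N0 := pnorm_at_gt0 ob.
rewrite /angle_at acosK // in_itv /=.
have L : (dot_at a b c / (pnorm (psub a b) * pnorm (psub c b))) ^+ 2
       + (orient a c b / (pnorm (psub a b) * pnorm (psub c b))) ^+ 2 = 1.
  by rewrite !expr_div_n -mulrDl dot_at_orient_sqr divff // sqrf_eq0 gt_eqF.
have := sqr_ge0 (orient a c b / (pnorm (psub a b) * pnorm (psub c b))).
rewrite -/(dot_at a b c); nra.
Qed.

Lemma angle_at_eq_cocircular a c b1 b2 :
  angle_at a b1 c = angle_at a b2 c -> 0 < orient a c b1 * orient a c b2 ->
  dot_at a b1 c * orient a c b2 = dot_at a b2 c * orient a c b1.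
Proof.
move=> eq_angle same_side.
have o1 : orient a c b1 != 0 by apply: contraTneq same_side => ->; rewrite mul0r ltxx.
have o2 : orient a c b2 != 0 by apply: contraTneq same_side => ->; rewrite mulr0 ltxx.
have L1 := dot_at_orient_sqr a b1 c; have L2 := dot_at_orient_sqr a b2 c.
have N1 := pnorm_at_gt0 o1; have N2 := pnorm_at_gt0 o2.
move: L1 L2 N1 N2 (cos_angle_at o1) (cos_angle_at o2); rewrite eq_angle.
set n1 := _ * _; set n2 := _ * _; set x := cos _ => L1 L2 N1 N2 d1E d2E.
clearbody n1 n2 x.
have {}d1E : dot_at a b1 c = x * n1 by rewrite d1E divfK ?gt_eqF.
have {}d2E : dot_at a b2 c = x * n2 by rewrite d2E divfK ?gt_eqF.
have o_sqr : (orient a c b1 * n2) ^+ 2 = (orient a c b2 * n1) ^+ 2.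
  have e1 : orient a c b1 ^+ 2 = n1 ^+ 2 * (1 - x ^+ 2).
    by rewrite -[LHS](addKr (dot_at a b1 c ^+ 2)) L1 d1E; ring.
  have e2 : orient a c b2 ^+ 2 = n2 ^+ 2 * (1 - x ^+ 2).
    by rewrite -[LHS](addKr (dot_at a b2 c ^+ 2)) L2 d2E; ring.
  by rewrite !exprMn e1 e2; ring.
have o_eq : orient a c b1 * n2 = orient a c b2 * n1.
  move/eqP: o_sqr; rewrite eqf_sqr => /orP[/eqP // | /eqP o_opp].
  have : 0 < orient a c b1 * n2 * (orient a c b2 * n1).
    by rewrite mulrACA mulr_gt0 // mulr_gt0.
  by rewrite o_opp mulNr oppr_gt0 ltNge sqr_ge0.
by rewrite d1E d2E -!mulrA (mulrC n1) -o_eq; ring.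
Qed.

(* For [r != 0] the zero set of [circle_form a c r k] is a circle through [a]
   and [c]: the form is [r] times the power of a point with respect to it. *)
Definition circle_form a c (r k : R) p : R := r * dot_at a p c - k * orient a c p.

Lemma circle_form_left a c (r k : R) : circle_form a c r k a = 0.
Proof. by rewrite /circle_form /dot_at /orient /dot /cross /psub /=; ring. Qed.

Lemma circle_form_right a c (r k : R) : circle_form a c r k c = 0.
Proof. by rewrite /circle_form /dot_at /orient /dot /cross /psub /=; ring. Qed.

Lemma circle_form_chord a c (r k : R) x y t :
  circle_form a c r k x = 0 -> circle_form a c r k y = 0 ->
  circle_form a c r k (lerp x y t) = - r * (t * (1 - t)) * dot (psub y x) (psub y x).
Proof.
move=> Fx Fy; transitivity ((1 - t) * circle_form a c r k x + t * circle_form a c r k y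
  - r * (t * (1 - t)) * dot (psub y x) (psub y x)); last by rewrite Fx Fy; ring.
by rewrite /circle_form /lerp /dot_at /orient /dot /cross /psub /padd /pscale /=; ring.
Qed.

(* [p] is where the line [a b2] meets the chord [b1 c]; it lies inside the
   circle through [a], [b1], [b2], [c], so its power is negative and [p] cannot
   lie beyond [b2] on the line [a b2]. *)
Lemma chords_cross a c b1 b2 :
  0 < orient a c b1 * orient a c b2 ->
  dot_at a b1 c * orient a c b2 = dot_at a b2 c * orient a c b1 ->
  0 <= orient a c b1 * orient a b2 b1 ->
  exists2 p, segment a b2 p /\ segment b1 c p & 0 < orient a c b1 * orient a c p.
Proof.
set o1 := orient a c b1; set o2 := orient a c b2; set f := orient a b2 b1.
move=> same_side cocirc between.
have o1n0 : o1 != 0 by apply: contraTneq same_side => ->; rewrite mul0r ltxx.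
have o2n0 : o2 != 0 by apply: contraTneq same_side => ->; rewrite mulr0 ltxx.
have den_pos : 0 < o1 * (f + o2) by rewrite mulrDr ltr_wpDl.
have den_n0 : f + o2 != 0 by apply: contraTneq den_pos => ->; rewrite mulr0 ltxx.
set u := f / (f + o2).
have uE : u = (o1 * f) / (o1 * (f + o2)) by rewrite -mulf_div divff // mul1r.
have u0 : 0 <= u by rewrite uE divr_ge0 // ltW.
have u1 : u < 1 by rewrite uE ltr_pdivrMr // mul1r; lra.
set p := lerp b1 c u.
have op : orient a c p = (1 - u) * o1 by rewrite orient_lerp orient_right mulr0 addr0.
have side_p : 0 < o1 * orient a c p.
  by rewrite op mulrCA mulr_gt0 ?subr_gt0 // -expr2 exprn_even_gt0.
have p_on_ab2 : orient a b2 p = 0.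
  by rewrite orient_lerp (orientC a b2 c) -/o2 -/f /u; field.
set t := orient a c p / o2.
have pE : p = lerp a b2 t := lerp_orient_eq0 p_on_ab2 o2n0.
have tE : t = (o1 * orient a c p) / (o1 * o2) by rewrite -mulf_div divff // mul1r.
have t0 : 0 < t by rewrite tE divr_gt0.
set F := circle_form a c o1 (dot_at a b1 c).
have Fb1 : F b1 = 0 by rewrite /F /circle_form mulrC subrr.
have Fb2 : F b2 = 0 by rewrite /F /circle_form cocirc mulrC subrr.
have chord_ab2 := circle_form_chord t (circle_form_left a c _ _) Fb2.
have chord_b1c := circle_form_chord u Fb1 (circle_form_right a c _ _).
have b2a : 0 < dot (psub b2 a) (psub b2 a).
  by apply: dot_psub_gt0 => b2a; move: o2n0; rewrite /o2 b2a orient_left eqxx.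
have t1 : t <= 1.
  have power : t * (1 - t) * dot (psub b2 a) (psub b2 a) =
               u * (1 - u) * dot (psub c b1) (psub c b1).
    apply: (@mulfI _ (- o1)); first by rewrite oppr_eq0.
    transitivity (F (lerp a b2 t)); first by rewrite /F chord_ab2; ring.
    by rewrite /F -pE chord_b1c; ring.
  have : 0 <= t * (1 - t) * dot (psub b2 a) (psub b2 a).
    by rewrite power mulr_ge0 ?dot_self_ge0 // mulr_ge0 // subr_ge0 ltW.
  by rewrite pmulr_lge0 // pmulr_rge0 // subr_ge0.
exists p; last exact: side_p.
split; last by exists u => //=; rewrite u0 ltW.
by rewrite pE; exists t => //=; rewrite ltW // t1.
Qed.

Lemma inscribed_bends_cross a c s b1 b2 :
  open_halfplane a c s b1 -> open_halfplane a c s b2 ->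
  angle_at a b1 c = angle_at a b2 c ->
  exists2 p, open_halfplane a c s p &
    (segment a b2 p /\ segment b1 c p) \/ (segment a b1 p /\ segment b2 c p).
Proof.
move=> h1 h2 eq_angle.
have same_side := open_halfplane_mul_gt0 h1 h2.
have cocirc := angle_at_eq_cocircular eq_angle same_side.
have [between | between] := leP 0 (orient a c b1 * orient a b2 b1).
  have [p seg side] := chords_cross same_side cocirc between.
  by exists p; [exact: open_halfplane_mul h1 side | left].
have [p seg side] : exists2 p, segment a b1 p /\ segment b2 c p &
                               0 < orient a c b2 * orient a c p.
  apply: chords_cross; [by rewrite mulrC | by rewrite cocirc |].
  rewrite (orientC a b1) mulrN oppr_ge0; nra.
by exists p; [exact: open_halfplane_mul h2 side | right].
Qed.

Definition perp p : pt2 R := (- p.2, p.1).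

(* An arc of central angle [2 beta], [beta = pi - alpha], over a chord of
   length [l] rises [l (1 - cos beta) / (2 sin beta)] above the chord midpoint. *)
Definition apex_height (alpha : R) : R :=
  (1 - cos (pi - alpha)) / (2 * sin (pi - alpha)).

Definition arc_apex (alpha : R) a c s : pt2 R :=
  padd (pscale 2^-1 (padd a c))
       (pscale ((if s then 1 else -1) * apex_height alpha) (perp (psub c a))).

Lemma sin_pi_sub_gt0 (alpha : R) : 0 < alpha < pi -> 0 < sin (pi - alpha).
Proof. by move=> /andP[a0 api]; apply: sin_gt0_pi; apply/andP; split; lra. Qed.

Lemma apex_height_gt0 (alpha : R) : 0 < alpha < pi -> 0 < apex_height alpha.
Proof.
move=> /sin_pi_sub_gt0 sin_gt0; rewrite divr_gt0 ?mulr_gt0 // subr_gt0.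
have := cos2Dsin2 (pi - alpha); have := cos_le1 (pi - alpha); nra.
Qed.

Lemma orient_arc_apex (alpha : R) a c s :
  orient a c (arc_apex alpha a c s) =
  (if s then 1 else -1) * apex_height alpha * dot (psub c a) (psub c a).
Proof.
rewrite /orient /arc_apex /perp /cross /dot /psub /padd /pscale /=.
by set h := apex_height alpha; case: s; field.
Qed.

Lemma open_halfplane_arc_apex (alpha : R) a c s : 0 < alpha < pi -> a <> c ->
  open_halfplane a c s (arc_apex alpha a c s).
Proof.
move=> /apex_height_gt0 h_gt0 /nesym /dot_psub_gt0 ca_gt0.
rewrite /open_halfplane /= -/(orient _ _ _) orient_arc_apex.
by case: s; rewrite ?mul1r ?mulN1r ?mulNr ?oppr_lt0 mulr_gt0.
Qed.

Lemma arc_apexC (alpha : R) a c s : arc_apex alpha c a s = arc_apex alpha a c (~~ s).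
Proof.
rewrite /arc_apex /perp /psub /padd /pscale /=.
by case: s; congr (_, _); rewrite /=; ring.
Qed.

Lemma circ_arc_apex (alpha : R) o (r t0 : R) : 0 < alpha < pi ->
  let th := 2 * (pi - alpha) in
  circ_arc o r t0 th (arc_apex alpha (padd o (pscale r (cos t0, sin t0)))
                       (padd o (pscale r (cos (t0 + th), sin (t0 + th)))) false).
Proof.
move=> alpha_range th; have sin_gt0 := sin_pi_sub_gt0 alpha_range.
move: alpha_range => /andP[a0 api].
exists (t0 + (pi - alpha)); first by rewrite /= /th; apply/andP; split; lra.
set b := pi - alpha in sin_gt0 th *; set phi := t0 + b.
have -> : t0 = phi - b by rewrite /phi; ring.
have -> : phi - b + th = phi + b by rewrite /th; ring.
rewrite cosB sinB cosD sinD /arc_apex /apex_height -/b /perp /psub /padd /pscale /=.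
by congr (_, _); field; rewrite gt_eqF.
Qed.

End PlaneGeometry.

Section AlphaEdges.
Variable R : realType.
Implicit Types (a c : pt2 R) (C : set (pt2 R)) (s : bool).

Lemma is_alpha_edge_sym k (alpha : R) a c C :
  is_alpha_edge k alpha c a C -> is_alpha_edge k alpha a c C.
Proof.
case: k => /= [[b [off_line [angle ->]]] | [o [r [t0 [r0 [-> ends]]]]]].
  exists b; split; [|split].
  - apply: contra_not off_line; rewrite /on_line /cross /psub /= => on_ac; lra.
  - rewrite -angle /angle_at; congr acos; congr (_ / _); first by rewrite /dot; ring.
    exact: mulrC.
  - by rewrite setUC segmentC (segmentC b).
by exists o, r, t0; do 2 split => //; case: ends; [right | left].
Qed.

Definition alpha_edge_on_side k (alpha : R) a c C s : Prop :=
  match k with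
  | Bend => exists2 b, open_halfplane a c s b &
      [/\ angle_at a b c = alpha, segment a b `<=` C & segment b c `<=` C]
  | Arc => C (arc_apex alpha a c s)
  end.

Lemma alpha_edge_side k (alpha : R) a c C : 0 < alpha < pi ->
  is_alpha_edge k alpha a c C -> exists s, alpha_edge_on_side k alpha a c C s.
Proof.
move=> alpha_range; case: k => /= [[b [off_line [angle ->]]] | ].
  exists (0 < orient a c b), b; first by apply/open_halfplane_orient/eqP.
  by split.
move=> [o [r [t0 [_ [-> [[-> ->] | [-> ->]]]]]]].
  by exists false; apply: circ_arc_apex.
by exists true; rewrite -[true]/(~~ false) -arc_apexC; apply: circ_arc_apex.
Qed.

Lemma alpha_edge_on_side_point k (alpha : R) a c C s : 0 < alpha < pi -> a <> c ->
  alpha_edge_on_side k alpha a c C s -> exists2 p, C p & open_halfplane a c s p.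
Proof.
move=> alpha_range ac; case: k => /= [[b side [_ sub_ab _]] | apex].
  by exists b => //; apply/sub_ab/segment_right.
by exists (arc_apex alpha a c s) => //; apply: open_halfplane_arc_apex.
Qed.

Section PlaneMultigraph.
Variables (k : edge_kind) (alpha : R) (V E : finType) (pos : V -> pt2 R).
Variables (src tgt : E -> V) (curve : E -> set (pt2 R)).
Hypothesis plane : plane_alpha_multigraph k alpha pos src tgt curve.
Variables (a c : pt2 R).
Local Notation between := (edge_between pos src tgt a c).

Lemma between_alpha_edge e : between e -> is_alpha_edge k alpha a c (curve e).
Proof.
have [_ _ edge _ _] := plane.
by case=> -[<- <-]; [| apply: is_alpha_edge_sym]; exact: edge.
Qed.

Lemma shared_point_off_halfplane e1 e2 p s : between e1 -> e1 != e2 ->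
  curve e1 p -> curve e2 p -> ~ open_halfplane a c s p.
Proof.
have [_ _ _ simple _] := plane.
move=> between1 ne p1 p2 /open_halfplane_ends; apply.
have [v [-> [ends _]]] := simple _ _ ne _ p1 p2.
by case: between1 => -[<- <-]; case: ends => ->; [left | right | right | left].
Qed.

Lemma alpha_edge_on_side_uniq e1 e2 s : 0 < alpha < pi -> a <> c ->
  between e1 -> alpha_edge_on_side k alpha a c (curve e1) s ->
  alpha_edge_on_side k alpha a c (curve e2) s -> e1 = e2.
Proof.
move=> alpha_range ac between1 w1 w2; have [// | ne] := eqVneq e1 e2; exfalso.
have off := shared_point_off_halfplane between1 ne.
case: k plane w1 w2 => _ /=.
  move=> [b1 side1 [angle1 sub_ab1 sub_b1c]] [b2 side2 [angle2 sub_ab2 sub_b2c]].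
  have [p side [[p2 p1] | [p1 p2]]] :=
    inscribed_bends_cross side1 side2 (etrans angle1 (esym angle2)).
  - exact: off (sub_b1c _ p1) (sub_ab2 _ p2) side.
  - exact: off (sub_ab1 _ p1) (sub_b2c _ p2) side.
by move=> apex1 apex2; apply: off apex1 apex2 (open_halfplane_arc_apex _ _ _).
Qed.

End PlaneMultigraph.
End AlphaEdges.

Theorem proposition1 (R : realType) (alpha : R) (k : edge_kind)
  (a c : pt2 R) (V E : finType) (pos : V -> pt2 R) (src tgt : E -> V)
  (curve : E -> set (pt2 R)) :
  0 < alpha < pi -> a <> c ->
  plane_alpha_multigraph k alpha pos src tgt curve ->
  (#|[set e : E | `[< edge_between pos src tgt a c e >]]| <= 2)%N /\
  (forall s : bool,
     (#|[set e : E | `[< edge_between pos src tgt a c e /\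
                        curve_in a c (curve e) (open_halfplane a c s) >]]| <= 1)%N).
Proof.
move=> alpha_range ac plane.
pose between := edge_between pos src tgt a c.
pose on_side s :=
  [set e : E | `[< between e /\ alpha_edge_on_side k alpha a c (curve e) s >]].
have on_side_le1 s : (#|on_side s| <= 1)%N.
  apply/card_le1_eqP => e1 e2; rewrite !inE => /asboolP[_ w1] /asboolP[b2 w2].
  exact: (alpha_edge_on_side_uniq plane alpha_range ac b2 w2 w1).
split.
  apply: leq_trans (leq_add (on_side_le1 true) (on_side_le1 false)).
  rewrite -cardUI; apply: leq_trans (leq_addr _ _).
  apply/subset_leq_card/fintype.subsetP => e.
  rewrite !inE => /asboolP be.
  have [[] side] := alpha_edge_side alpha_range (between_alpha_edge plane be).
    by apply/orP; left; rewrite inE; apply/asboolP.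
  by apply/orP; right; rewrite inE; apply/asboolP.
move=> s; apply: leq_trans (on_side_le1 s); apply: subset_leq_card.
apply/fintype.subsetP => e; rewrite !inE => /asboolP[be inside].
apply/asboolP; split => //.
have [s' side] := alpha_edge_side alpha_range (between_alpha_edge plane be).
have [p curve_p side_p] := alpha_edge_on_side_point alpha_range ac side.
suff -> : s = s' by [].
exact: open_halfplane_uniq (inside p (conj curve_p (open_halfplane_ends side_p))) side_p.
Qed.
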